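(* Let $f$ satisfy the $L$-descent condition for some $L>0$ and let $\{x^k\}$ be generated by Algorithm IRG with $\theta<\mu$, $\rho_k=\varepsilon_k$ for all $k$, and constant-type stepsizes (there exist $\delta\in(0,2)$ and $\delta'>0$ with $\delta'\le\frac{2-\delta}{L}$ and $t_k\in[\delta',\frac{2-\delta}{L}]$ for all $k$). Assume $\{x^k\}$ has an accumulation point $\bar x$ and $f$ satisfies the KL property at $\bar x$ with $\psi(t)=Mt^q$ for some $M>0$ and $q\in(0,1)$. Assume $\mathbb N\setminus\mathcal N$ is infinite, enumerate it increasingly as $j_1<j_2<\cdots$, and set $z^k:=x^{j_k}$. Then: (i) if $q\in(0,1/2]$, $\{z^k\}$ converges linearly to $\bar x$, i.e. there exist $C>0$ and $\lambda\in(0,1)$ with $\|z^k-\bar x\|\le C\lambda^k$ for all large $k$; (ii) if $q\in(1/2,1)$, there exists $\varrho>0$ with $\|z^k-\bar x\|\le\varrho k^{-\frac{1-q}{2q-1}}$ for all sufficiently large $k$.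
   Context: Algorithm IRG (general inexact reduced gradient framework). Let $f:\mathbb R^n\to\mathbb R$ be continuously differentiable. Parameters: initial point $x^1\in\mathbb R^n$, initial radii $\varepsilon_1>0$, $r_1>0$, reduction factors $\mu,\theta\in(0,1)$, and a sequence $\{\rho_k\}$ of positive numbers. For $k=1,2,\dots$: (1) choose $g^k\in\mathbb R^n$ with $\|g^k-\nabla f(x^k)\|\le\min\{\varepsilon_k,\rho_k\}$; (2) if $\|g^k\|\le r_k+\varepsilon_k$, set $r_{k+1}=\mu r_k$, $\varepsilon_{k+1}=\theta\varepsilon_k$, $d^k=0$; otherwise set $r_{k+1}=r_k$, $\varepsilon_{k+1}=\varepsilon_k$ and $d^k=-\frac{\|g^k\|-\varepsilon_k}{\|g^k\|}g^k$; (3) choose a stepsize $t_k>0$ by some rule; (4) set $x^{k+1}=x^k+t_kd^k$. The set of null iterations is $\mathcal N:=\{k\in\mathbb N: x^{k+1}=x^k\}$. $f$ satisfies the $L$-descent condition if $f(y)\le f(x)+\langle\nabla f(x),y-x\rangle+\frac L2\|y-x\|^2$ for all $x,y\in\mathbb R^n$. KL property with $\psi(t)=Mt^q$: there exist $\eta>0$ and a neighborhood $U$ of $\bar x$ such that $\|\nabla f(x)\|\ge M(f(x)-f(\bar x))^q$ for all $x\in U$ with $f(\bar x)<f(x)<f(\bar x)+\eta$. *)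

From HB Require Import structures.
From mathcomp Require Import all_boot all_order all_algebra.
From mathcomp Require Import all_classical all_reals all_analysis.
Set Implicit Arguments. Unset Strict Implicit. Unset Printing Implicit Defensive.
Import Order.TTheory GRing.Theory Num.Theory.
Import numFieldNormedType.Exports.
Local Open Scope ring_scope.

(* Standard (Euclidean) inner product and norm on R^n = 'rV[R]_n.
   (MathComp's built-in norm on matrices is the max norm, hence these.) *)
Definition dotv (R : realType) (n : nat) (u v : 'rV[R]_n) : R :=
  \sum_(i < n) u 0 i * v 0 i.

Definition enorm (R : realType) (n : nat) (u : 'rV[R]_n) : R :=
  Num.sqrt (dotv u u).

Definition C1_with_gradient (R : realType) (n : nat)
  (f : 'rV[R]_n -> R) (gf : 'rV[R]_n -> 'rV[R]_n) : Prop :=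
  (forall x, differentiable f x /\ forall v, 'd f x v = dotv (gf x) v)
  /\ continuous gf.

Definition L_descent (R : realType) (n : nat)
  (f : 'rV[R]_n -> R) (gf : 'rV[R]_n -> 'rV[R]_n) (L : R) : Prop :=
  forall x y, f y <= f x + dotv (gf x) (y - x) + L / 2 * enorm (y - x) ^+ 2.

Definition accumulation_point (R : realType) (n : nat)
  (x : nat -> 'rV[R]_n) (xbar : 'rV[R]_n) : Prop :=
  forall e : R, 0 < e -> forall K : nat, exists k, (K <= k)%N /\ enorm (x k - xbar) < e.

(* KL property at xbar with psi(t) = M t^q; the neighborhood U is taken as an
   open Euclidean ball around xbar (every neighborhood contains one). *)
Definition KL_power (R : realType) (n : nat)
  (f : 'rV[R]_n -> R) (gf : 'rV[R]_n -> 'rV[R]_n) (xbar : 'rV[R]_n) (M q : R) : Prop :=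
  exists eta : R, 0 < eta /\ exists r : R, 0 < r /\
    forall x, enorm (x - xbar) < r -> f xbar < f x -> f x < f xbar + eta ->
      M * powR (f x - f xbar) q <= enorm (gf x).

(* Sequences generated by Algorithm IRG (iterations indexed k = 1, 2, ...;
   index 0 is unused), with rho_k = eps_k and constant-type stepsizes
   t_k in [delta', (2 - delta)/L]. *)
Definition IRG_run (R : realType) (n : nat)
  (gf : 'rV[R]_n -> 'rV[R]_n) (L mu theta delta delta' : R)
  (x g d : nat -> 'rV[R]_n) (eps r rho t : nat -> R) : Prop :=
  [/\ 0 < eps 1%N, 0 < r 1%N, 0 < mu < 1, 0 < theta < 1 &
   forall k : nat, (1 <= k)%N ->
   [/\ 0 < rho k,
       enorm (g k - gf (x k)) <= Num.min (eps k) (rho k),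
       (if enorm (g k) <= r k + eps k then
          [/\ r k.+1 = mu * r k, eps k.+1 = theta * eps k & d k = 0]
        else
          [/\ r k.+1 = r k, eps k.+1 = eps k &
              d k = - ((enorm (g k) - eps k) / enorm (g k)) *: g k]),
       0 < t k & x k.+1 = x k + t k *: d k]].

(* Along the non-null iterations z_k = x^(j_k), IRG performs inexact gradient
   steps d_k with three properties: sufficient decrease
   f(z_(k+1)) <= f(z_k) - (delta delta'/2) |d_k|^2 (L-descent and the stepsize
   bounds), step bound |z_(k+1) - z_k| <= (2 - delta)/L |d_k|, and relative error
   |grad f(z_k)| <= (1 + 2 eps_1/r_1) |d_k| (because theta < mu keeps eps_k/r_k
   below eps_1/r_1).  With
   a_k = f(z_k) - f(xbar) > 0 and phi_k = a_k^(1-q), concavity of t^(1-q) and the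
   KL inequality give |d_k| <= C (phi_k - phi_(k+1)); hence once the iterates
   are near xbar they stay there, and the tail length from z_k, which bounds
   |z_k - xbar|, is at most a multiple of phi_k.  Finally
   a_(k+1) <= a_k - c a_k^(2q), so a_k decays geometrically when q <= 1/2, and
   a_k^(1-2q) grows linearly when q > 1/2, giving phi_k = O(k^(-(1-q)/(2q-1))). *)

From HB Require Import structures.
From mathcomp Require Import all_boot all_order all_algebra.
From mathcomp Require Import all_classical all_reals all_analysis.
From mathcomp Require Import lra ring zify.
Import Order.TTheory GRing.Theory Num.Theory.
Import numFieldNormedType.Exports.
Local Open Scope ring_scope.

Set Implicit Arguments. Unset Strict Implicit.

Section RealPowers.
Variable R : realType.

Lemma expR_mul_le_chord (s v : R) : 0 <= s -> s <= 1 -> expR (s * v) <= 1 - s + s * expR v.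
Proof.
move=> s0 s1; have := @convex_expR R (Itv01 s0 s1) v 0.
rewrite !convRE /= expR0 mulr0 addr0 mulr1 /unstable.onem; lra.
Qed.

Lemma powR_gt0E (a e : R) : 0 < a -> powR a e = expR (e * ln a).
Proof. by move=> a0; rewrite /powR gt_eqF. Qed.

(* Concavity of [t |-> t ^ s]: its graph lies below the tangent at [y]. *)
Lemma powR_concave_tangent (x y s : R) : 0 < x -> 0 < y -> 0 < s -> s < 1 ->
  s * (y - x) <= (powR y s - powR x s) * powR y (1 - s).
Proof.
move=> x0 y0 s0 s1.
have chord := @expR_mul_le_chord s (ln x - ln y) (ltW s0) (ltW s1).
rewrite expRB !lnK ?posrE // in chord.
have Ex : powR x s = powR y s * expR (s * (ln x - ln y)).
  by rewrite !powR_gt0E // -expRD; congr expR; ring.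
have Ey : powR y s * powR y (1 - s) = y.
  by rewrite -powRD ?(gt_eqF y0) ?implybT // addrC subrK powRr1 // ltW.
have Z0 := powR_ge0 y (1 - s); have Y0 := powR_ge0 y s.
rewrite Ex; move: Ey chord Z0 Y0.
set Y := powR y s; set Z := powR y (1 - s); set E := expR _ => Ey chord Z0 Y0.
have xE : x = x / y * y by rewrite mulfVK // gt_eqF.
have : 0 <= (Y * (1 - s + s * (x / y)) - Y * E) * Z.
  by apply: mulr_ge0 => //; rewrite subr_ge0 ler_wpM2l.
have -> : (Y * (1 - s + s * (x / y)) - Y * E) * Z
    = (Y * Z) * (1 - s + s * (x / y)) - Y * E * Z by ring.
rewrite Ey [in X in _ -> X]xE; lra.
Qed.

Lemma powRN_ge_Bernoulli (u p : R) : 0 < u -> 0 < p -> 1 - p * (u - 1) <= powR u (- p).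
Proof.
move=> u0 p0; rewrite powR_gt0E //.
have e1 := expR_ge1Dx (- p * ln u).
have l1 : ln u <= u - 1 by have := @le_ln1Dx R (u - 1); rewrite (addrC 1) subrK; apply; lra.
nra.
Qed.

Lemma powRN_le_anti (x y s : R) : 0 < x -> x <= y -> 0 <= s -> powR y (- s) <= powR x (- s).
Proof.
move=> x0 xy s0; have y0 := lt_le_trans x0 xy.
rewrite !powRN lef_pV2 ?posrE ?powR_gt0 //.
by apply: ge0_ler_powR => //; rewrite nnegrE ltW.
Qed.

Lemma geometric_bound (u : nat -> R) (lam : R) (k0 : nat) : 0 <= lam ->
  (forall k, (k0 <= k)%N -> u k.+1 <= lam * u k) ->
  forall m, u (k0 + m)%N <= lam ^+ m * u k0.
Proof.
move=> lam0 hu; elim=> [|m IH]; first by rewrite addn0 expr0 mul1r.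
rewrite addnS exprS -mulrA; apply: le_trans (hu _ (leq_addr _ _)) _.
exact: ler_wpM2l.
Qed.

Section PowerDecrease.
Variables (u : nat -> R) (c : R) (k0 : nat).
Hypothesis c_gt0 : 0 < c.
Hypothesis u_gt0 : forall k, (k0 <= k)%N -> 0 < u k.

Lemma power_decrease_linear (s : R) : 0 < s -> s <= 1 -> u k0 <= 1 ->
  (forall k, (k0 <= k)%N -> u k.+1 <= u k - c * powR (u k) s) ->
  c < 1 /\ forall k, (k0 <= k)%N -> u k.+1 <= (1 - c) * u k.
Proof.
move=> s0 s1 uk0 hu.
have le1 m : u (k0 + m)%N <= 1.
  elim: m => [|m IH]; first by rewrite addn0.
  rewrite addnS; apply: le_trans _ IH; have := hu _ (leq_addr m k0).
  move=> h; have := mulr_ge0 (ltW c_gt0) (powR_ge0 (u (k0 + m)%N) s); lra.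
have lin k : (k0 <= k)%N -> u k.+1 <= (1 - c) * u k.
  move=> kk; have [m km] : exists m, k = (k0 + m)%N by exists (k - k0)%N; rewrite subnKC.
  have us : u k <= powR (u k) s by apply: ger1_powR; rewrite // u_gt0 // km le1.
  have := hu k kk; have := ler_wpM2l (ltW c_gt0) us; lra.
split=> //; have h := lin k0 (leqnn _); have p1 := u_gt0 (leqnSn k0).
have p0 := u_gt0 (leqnn k0).
have : 0 < (1 - c) * u k0 by lra.
by rewrite pmulr_lgt0 // subr_gt0.
Qed.

Lemma power_decrease_sublinear (p : R) : 0 < p ->
  (forall k, (k0 <= k)%N -> u k.+1 <= u k - c * powR (u k) (1 + p)) ->
  forall m, m%:R * (p * c) <= powR (u (k0 + m)%N) (- p).
Proof.
move=> p0 hu.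
have step k : (k0 <= k)%N -> powR (u k) (- p) + p * c <= powR (u k.+1) (- p).
  move=> kk; have uk := u_gt0 kk; have uk1 := u_gt0 (leqW kk).
  set b := powR (u k) (- p).
  have b0 : 0 <= b := powR_ge0 _ _.
  have bP : b * powR (u k) (1 + p) = u k.
    by rewrite -powRD ?(gt_eqF uk) ?implybT // addrCA addNr addr0 powRr1 // ltW.
  pose v := u k.+1 / u k.
  have v0 : 0 < v by rewrite divr_gt0.
  have uv : u k.+1 = v * u k by rewrite /v mulfVK // gt_eqF.
  have -> : powR (u k.+1) (- p) = powR v (- p) * b by rewrite uv powRM // ltW.
  have hc : c <= b * (1 - v).
    rewrite -(ler_pM2r uk) -mulrA mulrBl mul1r -uv.
    have := ler_wpM2l b0 (hu k kk); rewrite mulrBr -[b * (c * _)]mulrCA bP; lra.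
  have := ler_wpM2r b0 (powRN_ge_Bernoulli v0 p0).
  have : p * c <= p * (b * (1 - v)) by rewrite ler_pM2l.
  lra.
elim=> [|m IH]; first by rewrite mul0r powR_ge0.
rewrite addnS -addn1 natrD; have := step _ (leq_addr m k0); lra.
Qed.

End PowerDecrease.
End RealPowers.

Section Euclidean.
Variables (R : realType) (n : nat).
Implicit Types (u v w : 'rV[R]_n).

Lemma dotvC u v : dotv u v = dotv v u.
Proof. by apply: eq_bigr => i _; rewrite mulrC. Qed.

Lemma dotvDl u v w : dotv (u + v) w = dotv u w + dotv v w.
Proof. by rewrite /dotv -big_split; apply: eq_bigr => i _; rewrite !mxE mulrDl. Qed.

Lemma dotvZl (a : R) u w : dotv (a *: u) w = a * dotv u w.
Proof. by rewrite /dotv mulr_sumr; apply: eq_bigr => i _; rewrite !mxE mulrA. Qed.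

Lemma dotvZr (a : R) u w : dotv u (a *: w) = a * dotv u w.
Proof. by rewrite dotvC dotvZl dotvC. Qed.

Lemma dotv_comb (a b : R) u v :
  dotv (a *: u + b *: v) (a *: u + b *: v) =
  a ^+ 2 * dotv u u + 2 * a * b * dotv u v + b ^+ 2 * dotv v v.
Proof.
rewrite /dotv !mulr_sumr -!big_split; apply: eq_bigr => i _; rewrite !mxE /=; ring.
Qed.

Lemma dotvv_ge0 u : 0 <= dotv u u.
Proof. by apply: sumr_ge0 => i _; rewrite -expr2 sqr_ge0. Qed.

Lemma enorm_ge0 u : 0 <= enorm u.
Proof. exact: sqrtr_ge0. Qed.

Lemma enorm_sqr u : enorm u ^+ 2 = dotv u u.
Proof. by rewrite /enorm sqr_sqrtr // dotvv_ge0. Qed.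

Lemma enormZ (a : R) u : enorm (a *: u) = `|a| * enorm u.
Proof.
have := dotv_comb a 0 u u; rewrite scale0r addr0 => E.
by rewrite /enorm E -sqrtr_sqr -sqrtrM ?sqr_ge0 //; congr Num.sqrt; ring.
Qed.

Lemma enormN u : enorm (- u) = enorm u.
Proof. by rewrite -scaleN1r enormZ normrN normr1 mul1r. Qed.

Lemma enorm0 : enorm (0 : 'rV[R]_n) = 0.
Proof. by rewrite -(scale0r (0 : 'rV[R]_n)) enormZ normr0 mul0r. Qed.

Lemma enormBC u v : enorm (u - v) = enorm (v - u).
Proof. by rewrite -enormN opprB. Qed.

Lemma dotv_le_enorm u v : dotv u v <= enorm u * enorm v.
Proof.
have [uu0|uu_neq0] := eqVneq (dotv u u) 0.
  have u0 i : u 0 i = 0.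
    apply/eqP; rewrite -sqrf_eq0 expr2; apply/eqP.
    by apply: (psumr_eq0P _ uu0) => // k _; rewrite -expr2 sqr_ge0.
  rewrite /dotv big1 ?mulr_ge0 ?enorm_ge0 // => i _; by rewrite u0 mul0r.
have uu_gt0 : 0 < dotv u u by rewrite lt_neqAle eq_sym uu_neq0 dotvv_ge0.
have := dotvv_ge0 ((- dotv u v) *: u + (dotv u u) *: v); rewrite dotv_comb => H.
have CS : dotv u v ^+ 2 <= dotv u u * dotv v v by nra.
apply: le_trans (ler_norm _) _.
by rewrite /enorm -sqrtrM ?dotvv_ge0 // -sqrtr_sqr ler_sqrt // mulr_ge0 ?dotvv_ge0.
Qed.

Lemma enormD_le u v : enorm (u + v) <= enorm u + enorm v.
Proof.
have := dotv_comb 1 1 u v; rewrite !scale1r => E.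
have CS := dotv_le_enorm u v.
rewrite -(ler_pXn2r (n := 2)) ?nnegrE ?addr_ge0 ?enorm_ge0 //.
by rewrite enorm_sqr E sqrrD !enorm_sqr; nra.
Qed.

Lemma enormB_le u v w : enorm (u - w) <= enorm (u - v) + enorm (v - w).
Proof. by have := enormD_le (u - v) (v - w); rewrite addrA subrK. Qed.

Lemma mxnorm_le_enorm u : `|u| <= enorm u.
Proof.
rewrite [leLHS]mx_normrE; apply: bigmax_le => [|[i k] _]; first exact: enorm_ge0.
rewrite (ord1 i) /enorm -sqrtr_sqr ler_sqrt ?dotvv_ge0 // /dotv (bigD1 k) //=.
by rewrite -[leLHS]addr0 expr2 lerD2l sumr_ge0 // => m _; rewrite -expr2 sqr_ge0.
Qed.

Lemma continuous_enorm_ball (h : 'rV[R]_n -> R) u : {for u, continuous h} ->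
  forall e, 0 < e -> exists2 r, 0 < r & forall v, enorm (v - u) < r -> `|h u - h v| < e.
Proof.
move=> /cvgrPdist_lt hc e e0; have /nbhs_normP[r /= r0 ball] := hc e e0.
exists r => // v vu; apply: ball => /=.
by apply: le_lt_trans (mxnorm_le_enorm _) _; rewrite enormBC.
Qed.

End Euclidean.

Section Enumeration.
Variables (T : Type) (x : nat -> T) (j : nat -> nat).
Hypothesis j_incr : forall k, (1 <= k)%N -> (j k < j k.+1)%N.

Lemma enum_leq k k' : (1 <= k)%N -> (k <= k')%N -> (j k <= j k')%N.
Proof.
move=> k1 /subnKC <-; elim: (k' - k)%N => [|p IH]; first by rewrite addn0.
by rewrite addnS (leq_trans IH) // ltnW // j_incr // (leq_trans k1) // leq_addr.
Qed.

Lemma enum_gt0 k : (2 <= k)%N -> (0 < j k)%N.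
Proof.
move=> k2; apply: (@leq_trans (j 2)); last exact: enum_leq k2.
exact: leq_ltn_trans (leq0n _) (j_incr (k:=1) isT).
Qed.

Lemma enum_bracket i : (j 1 < i)%N ->
  exists k, [/\ (1 <= k)%N, (j k < i)%N & (i <= j k.+1)%N].
Proof.
elim: i => [//|i IH] hi; case: (ltnP (j 1) i) => h.
  have [k [k1 h1 h2]] := IH h.
  case: (ltnP i (j k.+1)) => h3; first by exists k; split => //; exact: leqW.
  by exists k.+1; split => //; apply: leq_trans (j_incr _); rewrite ?ltnS.
have -> : i = j 1 by apply/eqP; rewrite eqn_leq h -ltnS hi.
by exists 1%N; split => //; apply: j_incr.
Qed.

Hypothesis j_null : forall m, (1 <= m)%N -> x m.+1 <> x m ->
  exists k, (1 <= k)%N /\ j k = m.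

Lemma const_between_enum k i : (1 <= k)%N -> (j k < i)%N -> (i <= j k.+1)%N ->
  x i = x (j k.+1).
Proof.
move=> k1 + /subnKC; move: (j k.+1 - i)%N => p; elim: p i => [|p IH] i hi.
  by rewrite addn0 => ->.
rewrite addnS -addSn => e; rewrite -(IH i.+1) ?(ltn_trans hi) //.
case: (pselect (x i.+1 = x i)) => [->//|hne].
have [k' [k'1 jk']] := j_null (leq_ltn_trans (leq0n _) hi) hne.
case: (leqP k' k) => hk; first by have := enum_leq k'1 hk; lia.
by have := enum_leq (leqW k1) hk; lia.
Qed.

Lemma enum_next k : (1 <= k)%N -> x (j k.+1) = x (j k).+1.
Proof. by move=> k1; rewrite (const_between_enum k1 (ltnSn _) (j_incr k1)). Qed.

Lemma enum_frequently (P : T -> Prop) :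
  (forall K, exists i, (K <= i)%N /\ P (x i)) ->
  forall K, exists k, (K <= k)%N /\ P (x (j k)).
Proof.
move=> freq K; have [i [hi Pi]] := freq (j K.+1).+1.
have j1i : (j 1 < i)%N by apply: leq_ltn_trans hi; exact: enum_leq.
have [k [k1 lo hi']] := enum_bracket j1i.
exists k.+1; split; last by rewrite -(const_between_enum k1 lo hi').
rewrite leqNgt; apply/negP => kK.
by have := @enum_leq k.+1 K.+1 isT (ltnW (leqW kK)); lia.
Qed.

End Enumeration.

Section DecreasingValues.
Variables (R : realType) (n : nat) (f : 'rV[R]_n -> R) (z : nat -> 'rV[R]_n).
Variables (xb : 'rV[R]_n) (k1 : nat).
Hypothesis f_cont : {for xb, continuous f}.
Hypothesis z_freq : forall e, 0 < e -> forall K, exists k, (K <= k)%N /\ enorm (z k - xb) < e.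
Hypothesis f_decr : forall k, (k1 <= k)%N -> f (z k.+1) < f (z k).

Lemma values_nonincr k m : (k1 <= k)%N -> (k <= m)%N -> f (z m) <= f (z k).
Proof.
move=> kk /subnKC <-; elim: (m - k)%N => [|p IH]; first by rewrite addn0.
by rewrite addnS (le_trans _ IH) // ltW // f_decr // (leq_trans kk) // leq_addr.
Qed.

Lemma values_gt_limit k : (k1 <= k)%N -> f xb < f (z k).
Proof.
move=> kk; rewrite ltNge; apply/negP => le_k.
have e0 : 0 < f xb - f (z k.+1) by have := f_decr kk; lra.
have [r r0 ball] := continuous_enorm_ball f_cont e0.
have [k' [kk' zk']] := z_freq r0 k.+1.
have := ball _ zk'; have := values_nonincr (leqW kk) kk'.
have := ler_norm (f xb - f (z k')); lra.
Qed.

Lemma values_cvg_limit e : 0 < e -> exists K, forall k, (K <= k)%N -> f (z k) - f xb < e.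
Proof.
move=> e0; have [r r0 ball] := continuous_enorm_ball f_cont e0.
have [k [kk zk]] := z_freq r0 k1; exists k => k' kk'.
have := ball _ zk; rewrite distrC; have := values_nonincr kk kk'.
have := ler_norm (f (z k) - f xb); lra.
Qed.

End DecreasingValues.

Section KLRates.
Variables (R : realType) (n : nat) (z : nat -> 'rV[R]_n) (xb : 'rV[R]_n) (a D : nat -> R).
Variables (al be T M q eta rho : R) (k1 : nat).
Hypotheses (al_gt0 : 0 < al) (be_gt0 : 0 < be) (T_gt0 : 0 < T) (M_gt0 : 0 < M).
Hypotheses (q_gt0 : 0 < q) (q_lt1 : q < 1) (eta_gt0 : 0 < eta) (rho_gt0 : 0 < rho).
Hypothesis D_ge0 : forall k, (k1 <= k)%N -> 0 <= D k.
Hypothesis z_step : forall k, (k1 <= k)%N -> enorm (z k.+1 - z k) <= T * D k.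
Hypothesis a_suff_decr : forall k, (k1 <= k)%N -> a k.+1 <= a k - al * D k ^+ 2.
Hypothesis a_gt0 : forall k, (k1 <= k)%N -> 0 < a k.
Hypothesis KL : forall k, (k1 <= k)%N -> enorm (z k - xb) < rho -> a k < eta ->
  M * powR (a k) q <= be * D k.
Hypothesis z_freq : forall e, 0 < e -> forall K, exists k, (K <= k)%N /\ enorm (z k - xb) < e.
Hypothesis a_cvg0 : forall e, 0 < e -> exists K, forall k, (K <= k)%N -> a k < e.

Let phi k := powR (a k) (1 - q).
Let Cp := be / (M * al * (1 - q)).

Let phi_ge0 k : 0 <= phi k. Proof. exact: powR_ge0. Qed.
Let Cp_gt0 : 0 < Cp. Proof. by rewrite divr_gt0 // !mulr_gt0 // subr_gt0. Qed.

Lemma a_nonincr k m : (k1 <= k)%N -> (k <= m)%N -> a m <= a k.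
Proof.
move=> kk /subnKC <-; elim: (m - k)%N => [|p IH]; first by rewrite addn0.
rewrite addnS (le_trans _ IH) //; have kp : (k1 <= k + p)%N by rewrite (leq_trans kk) ?leq_addr.
by have := a_suff_decr kp; have := mulr_ge0 (ltW al_gt0) (sqr_ge0 (D (k + p)%N)); lra.
Qed.

(* The KL inequality turns the decrease of [a] into a decrease of the
   desingularised quantity [a ^ (1 - q)], which dominates the step length. *)
Lemma D_le_phiB k : (k1 <= k)%N -> M * powR (a k) q <= be * D k ->
  D k <= Cp * (phi k - phi k.+1).
Proof.
move=> kk KLk; have ak := a_gt0 kk; have ak1 := a_gt0 (leqW kk).
have r0 : 0 < 1 - q by rewrite subr_gt0.
have r1 : 1 - q < 1 by rewrite ltrBlDr ltrDl.
have := powR_concave_tangent ak1 ak r0 r1.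
rewrite (_ : 1 - (1 - q) = q); last by ring.
have P0 : 0 < powR (a k) q by apply: powR_gt0.
have := a_suff_decr kk; have Dk0 := D_ge0 kk.
rewrite -/(phi k) -/(phi k.+1); move: KLk P0 Dk0.
set P := powR (a k) q; set Dk := D k; set Dl := phi k - phi k.+1.
move=> KLk P0 Dk0 decr tangent.
have h1 : (1 - q) * al * Dk ^+ 2 <= Dl * P by nra.
have h2 : (M * P) * ((1 - q) * al * Dk) <= (be * Dk) * ((1 - q) * al * Dk).
  by apply: ler_wpM2r => //; rewrite !mulr_ge0 // ltW.
have h3 : M * (1 - q) * al * Dk <= be * Dl.
  by rewrite -(ler_pM2r P0); have := ler_wpM2l (ltW be_gt0) h1; nra.
by rewrite /Cp mulrAC ler_pdivlMr ?mulr_gt0 //; nra.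
Qed.

Lemma step_le_phiB k : (k1 <= k)%N -> M * powR (a k) q <= be * D k ->
  enorm (z k.+1 - z k) <= T * Cp * (phi k - phi k.+1).
Proof.
move=> kk KLk; apply: le_trans (z_step kk) _.
by rewrite -mulrA ler_pM2l // D_le_phiB.
Qed.

(* Once [a] is small enough the iterates can no longer leave the KL ball: the
   total length of the remaining path is at most [T Cp phi]. *)
Lemma KL_eventually : exists k0, [/\ (k1 <= k0)%N, a k0 <= 1 &
  forall k, (k0 <= k)%N -> M * powR (a k) q <= be * D k].
Proof.
have TC0 : 0 < T * Cp by rewrite mulr_gt0.
pose s := powR (rho / (2 * (T * Cp))) (1 / (1 - q)).
have small k : (k1 <= k)%N -> a k < s -> T * Cp * phi k < rho / 2.
  move=> kk aks; have : phi k < powR s (1 - q).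
    by apply: gt0_ltr_powR; rewrite ?nnegrE ?subr_gt0 ?powR_ge0 // ltW // a_gt0.
  rewrite /s -powRrM mul1r mulVf ?gt_eqF ?subr_gt0 // powRr1; last first.
    by rewrite ltW // divr_gt0 // mulr_gt0.
  move=> phik; rewrite (_ : rho / 2 = T * Cp * (rho / (2 * (T * Cp)))).
    by rewrite ltr_pM2l.
  by field; rewrite !gt_eqF.
have m0 : 0 < Num.min (Num.min eta 1) s.
  by rewrite !lt_min eta_gt0 ltr01 powR_gt0 // divr_gt0 // mulr_gt0.
have [K1 HK1] := a_cvg0 m0.
have rho2 : 0 < rho / 2 by rewrite divr_gt0.
have [k0 [Hk0 zk0]] := z_freq rho2 (maxn K1 k1).
have k1k0 : (k1 <= k0)%N by rewrite (leq_trans _ Hk0) // leq_maxr.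
have /and3P[ak0eta ak01 ak0s] : [&& a k0 < eta, a k0 < 1 & a k0 < s].
  by have := HK1 k0 (leq_trans (leq_maxl _ _) Hk0); rewrite !lt_min -andbA.
have KL_at k : (k0 <= k)%N ->
    enorm (z k - xb) <= enorm (z k0 - xb) + T * Cp * (phi k0 - phi k) ->
    M * powR (a k) q <= be * D k.
  move=> kk0 zk; have kk := leq_trans k1k0 kk0; apply: KL => //.
    apply: le_lt_trans zk _; have := small _ k1k0 ak0s.
    have := mulr_ge0 (ltW TC0) (phi_ge0 k); lra.
  exact: le_lt_trans (a_nonincr k1k0 kk0) ak0eta.
have trap m : enorm (z (k0 + m)%N - xb) <=
    enorm (z k0 - xb) + T * Cp * (phi k0 - phi (k0 + m)%N).
  elim: m => [|m IH]; first by rewrite addn0 subrr mulr0 addr0.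
  have kk0 := leq_addr m k0; rewrite addnS.
  have := step_le_phiB (leq_trans k1k0 kk0) (KL_at _ kk0 IH).
  have := enormB_le (z (k0 + m).+1) (z (k0 + m)%N) xb; lra.
exists k0; split => //; first exact: ltW.
by move=> k /subnKC <-; apply: KL_at (leq_addr _ _) (trap _).
Qed.

Section FromKLRegion.
Variable k0 : nat.
Hypothesis k1k0 : (k1 <= k0)%N.
Hypothesis KL_from : forall k, (k0 <= k)%N -> M * powR (a k) q <= be * D k.

Lemma dist_le_phi k : (k0 <= k)%N -> enorm (z k - xb) <= T * Cp * phi k.
Proof.
move=> kk0.
have path m : enorm (z (k + m)%N - z k) <= T * Cp * (phi k - phi (k + m)%N).
  elim: m => [|m IH]; first by rewrite addn0 !subrr enorm0 mulr0.
  have km := leq_trans kk0 (leq_addr m k); rewrite addnS.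
  have := step_le_phiB (leq_trans k1k0 km) (KL_from km).
  have := enormB_le (z (k + m).+1) (z (k + m)%N) (z k); lra.
apply/ler_addgt0Pr => e e0; have [k' [kk' zk']] := z_freq e0 k.
have := path (k' - k)%N; rewrite subnKC // enormBC.
have := enormB_le (z k) (z k') xb.
have := mulr_ge0 (ltW (mulr_gt0 T_gt0 Cp_gt0)) (phi_ge0 k'); lra.
Qed.

Lemma a_power_decrease k : (k0 <= k)%N ->
  a k.+1 <= a k - al * M ^+ 2 / be ^+ 2 * powR (a k) (2 * q).
Proof.
move=> kk0; have kk := leq_trans k1k0 kk0.
rewrite [2 * q]mulrC powRrM powR_mulrn ?powR_ge0 //.
have sq : (M * powR (a k) q) ^+ 2 <= (be * D k) ^+ 2.
  rewrite ler_sqr ?nnegrE ?(KL_from kk0) //.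
    by rewrite mulr_ge0 ?powR_ge0 ?ltW.
  by rewrite mulr_ge0 ?D_ge0 ?ltW.
have : al * M ^+ 2 / be ^+ 2 * powR (a k) q ^+ 2 <= al * D k ^+ 2.
  have -> : al * M ^+ 2 / be ^+ 2 * powR (a k) q ^+ 2 = al / be ^+ 2 * (M * powR (a k) q) ^+ 2.
    by rewrite exprMn; field; rewrite gt_eqF.
  have -> : al * D k ^+ 2 = al / be ^+ 2 * (be * D k) ^+ 2 by field; rewrite gt_eqF.
  by apply: ler_wpM2l sq; rewrite divr_ge0 ?sqr_ge0 ?ltW.
have := a_suff_decr kk; lra.
Qed.

End FromKLRegion.

Lemma KL_linear_rate : q <= 1 / 2 ->
  exists C lam : R, 0 < C /\ 0 < lam < 1 /\
    exists K : nat, forall k, (K <= k)%N -> enorm (z k - xb) <= C * lam ^+ k.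
Proof.
move=> q_half; have [k0 [k1k0 ak0 KLk]] := KL_eventually.
have a0 k : (k0 <= k)%N -> 0 < a k by move=> kk; apply/a_gt0/(leq_trans k1k0).
have c0 : 0 < al * M ^+ 2 / be ^+ 2 by rewrite divr_gt0 ?mulr_gt0 ?exprn_gt0.
have q2 : 0 < 2 * q by rewrite mulr_gt0.
have q2' : 2 * q <= 1 by move: q_half; lra.
have [c1 contr] := power_decrease_linear c0 a0 q2 q2' ak0 (a_power_decrease k1k0 KLk).
set lam0 := 1 - _ in contr; have lam00 : 0 < lam0 by rewrite subr_gt0.
pose lam := powR lam0 (1 - q).
have lam0' : 0 < lam by apply: powR_gt0.
have lam1 : lam < 1.
  have r0 : 0 < 1 - q by rewrite subr_gt0.
  have := @gt0_ltr_powR R (1 - q) r0 lam0 1.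
  by rewrite powR1; apply; rewrite ?nnegrE ?ltW // ltrBlDr ltrDl.
have phistep k : (k0 <= k)%N -> phi k.+1 <= lam * phi k.
  move=> kk0; rewrite /phi /lam -powRM ?(ltW lam00) ?(ltW (a0 _ kk0)) //.
  have r0 : 0 <= 1 - q by rewrite subr_ge0 ltW.
  apply: (ge0_ler_powR r0); rewrite ?nnegrE ?contr //.
    by rewrite ltW // a0 // leqW.
  by rewrite mulr_ge0 // ltW // a0.
have phi0 : 0 < phi k0 by apply/powR_gt0/a0.
exists (T * Cp * phi k0 / lam ^+ k0), lam; split.
  by rewrite divr_gt0 ?exprn_gt0 // mulr_gt0 // mulr_gt0.
split; first by apply/andP.
exists k0 => k /subnKC <-; set m := (k - k0)%N.
apply: le_trans (dist_le_phi k1k0 KLk (leq_addr _ _)) _.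
rewrite exprD mulrA divfK ?expf_neq0 ?gt_eqF // -[leRHS]mulrA.
rewrite ler_pM2l ?(mulr_gt0 T_gt0 Cp_gt0) // mulrC.
exact: geometric_bound (ltW lam0') phistep m.
Qed.

Lemma KL_sublinear_rate : 1 / 2 < q ->
  exists vr : R, 0 < vr /\ exists K : nat, forall k, (K <= k)%N ->
    enorm (z k - xb) <= vr * powR (k%:R) (- ((1 - q) / (2 * q - 1))).
Proof.
move=> q_half; have [k0 [k1k0 _ KLk]] := KL_eventually.
have a0 k : (k0 <= k)%N -> 0 < a k by move=> kk; apply/a_gt0/(leq_trans k1k0).
set c := al * M ^+ 2 / be ^+ 2.
have c0 : 0 < c by rewrite divr_gt0 ?mulr_gt0 ?exprn_gt0.
set p := 2 * q - 1; have p0 : 0 < p by rewrite subr_gt0; lra.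
have decr k : (k0 <= k)%N -> a k.+1 <= a k - c * powR (a k) (1 + p).
  by rewrite /p (addrC 1) subrK; exact: a_power_decrease.
have grow := power_decrease_sublinear a0 p0 decr.
set s := (1 - q) / p; have s0 : 0 <= s by apply: divr_ge0; [rewrite subr_ge0 ltW | exact: ltW].
have phiE k : phi k = powR (powR (a k) (- p)) (- s).
  by rewrite -powRrM /s mulrN mulNr opprK mulrCA divff ?gt_eqF // mulr1.
have pc0 : 0 < p * c / 2 by rewrite divr_gt0 // mulr_gt0.
exists (T * Cp * powR (p * c / 2) (- s)); split.
  exact: mulr_gt0 (mulr_gt0 T_gt0 Cp_gt0) (powR_gt0 _ pc0).
exists (2 * k0).+1 => k kk.
have [m -> k0m] : exists2 m, k = (k0 + m)%N & (k0 < m)%N.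
  by exists (k - k0)%N; clear -kk; lia.
 apply: le_trans (dist_le_phi k1k0 KLk (leq_addr _ _)) _.
rewrite -[leRHS]mulrA ler_pM2l ?(mulr_gt0 T_gt0 Cp_gt0) // phiE.
have km_pos : 0 < (k0 + m)%N%:R * (p * c / 2).
  by rewrite mulr_gt0 // ltr0n addn_gt0 (leq_ltn_trans (leq0n _) k0m) orbT.
have hm : (k0 + m)%N%:R * (p * c / 2) <= m%:R * (p * c).
  have -> : m%:R * (p * c) = (m * 2)%N%:R * (p * c / 2) by rewrite natrM; field.
  by apply: ler_wpM2r; rewrite ?(ltW pc0) // ler_nat muln2 -addnn leq_add2r ltnW.
have := powRN_le_anti km_pos (le_trans hm (grow m)) s0.
by rewrite powRM ?ler0n ?(ltW pc0) // mulrC.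
Qed.

Lemma KL_convergence_rates :
  (q <= 1 / 2 ->
     exists C lam : R, 0 < C /\ 0 < lam < 1 /\
       exists K : nat, forall k, (K <= k)%N -> enorm (z k - xb) <= C * lam ^+ k) /\
  (1 / 2 < q ->
     exists vr : R, 0 < vr /\ exists K : nat, forall k, (K <= k)%N ->
       enorm (z k - xb) <= vr * powR (k%:R) (- ((1 - q) / (2 * q - 1)))).
Proof. by split; [exact: KL_linear_rate | exact: KL_sublinear_rate]. Qed.

End KLRates.

Section InexactDirection.
Variables (R : realType) (n : nat).
Implicit Types (u v w : 'rV[R]_n).

Lemma L_descent_line (f : 'rV[R]_n -> R) gf L u v (s : R) : L_descent f gf L -> 0 <= s ->
  f (u + s *: v) <= f u + s * dotv (gf u) v + L / 2 * s ^+ 2 * enorm v ^+ 2.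
Proof.
move=> descent s0; have := descent u (u + s *: v).
by rewrite (addrC u) addrK dotvZr enormZ ger0_norm // exprMn mulrA.
Qed.

Lemma enorm_inexact_direction v (e : R) : 0 <= e -> e < enorm v ->
  enorm (- ((enorm v - e) / enorm v) *: v) = enorm v - e.
Proof.
move=> e0 ev; have v0 : 0 < enorm v := le_lt_trans e0 ev.
by rewrite enormZ normrN ger0_norm ?divfK ?gt_eqF // divr_ge0 ?subr_ge0 ?ltW.
Qed.

Lemma dotv_inexact_direction v w (e : R) : 0 <= e -> e < enorm v -> enorm (v - w) <= e ->
  dotv w (- ((enorm v - e) / enorm v) *: v) <= - (enorm v - e) ^+ 2.
Proof.
move=> e0 ev err; have v0 : 0 < enorm v := le_lt_trans e0 ev.
set dir := - _ *: v.
have dirE : enorm dir = enorm v - e by exact: enorm_inexact_direction.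
have CS := dotv_le_enorm (w - v) dir; rewrite enormBC dirE in CS.
have vdir : dotv v dir = - ((enorm v - e) * enorm v).
  by rewrite /dir dotvC dotvZl -enorm_sqr; field; rewrite gt_eqF.
rewrite -[w in dotv w _](subrK v) dotvDl vdir.
have : enorm (v - w) * (enorm v - e) <= e * (enorm v - e).
  by rewrite ler_wpM2r // subr_ge0 ltW.
lra.
Qed.

End InexactDirection.

Section IRG.
Variables (R : realType) (n : nat) (f : 'rV[R]_n -> R) (gf : 'rV[R]_n -> 'rV[R]_n).
Variables (L mu theta delta delta' : R) (x g d : nat -> 'rV[R]_n) (eps r rho t : nat -> R).
Hypothesis run : IRG_run gf L mu theta delta delta' x g d eps r rho t.
Hypothesis theta_lt_mu : theta < mu.
Hypothesis rho_eps : forall k, (1 <= k)%N -> rho k = eps k.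
Hypothesis L_gt0 : 0 < L.
Hypothesis descent : L_descent f gf L.
Hypotheses (delta_gt0 : 0 < delta) (delta'_gt0 : 0 < delta').
Hypothesis t_bounds : forall k, (1 <= k)%N -> delta' <= t k <= (2 - delta) / L.

(* At each null step [eps] shrinks by [theta] and [r] by the larger factor [mu]. *)
Lemma IRG_eps_r_ratio m : [/\ 0 < eps m.+1, 0 < r m.+1 & eps m.+1 * r 1%N <= eps 1%N * r m.+1].
Proof.
have [eps1 r1 /andP[mu0 _] /andP[th0 _] step] := run.
elim: m => [|m [e0 r0 er]]; first by rewrite mulrC.
have [_ _ + _ _] := step m.+1 isT; case: ifP => _ [-> -> _] //.
split; rewrite ?mulr_gt0 //.
have := ler_wpM2l (ltW th0) er.
have := ler_wpM2r (ltW (mulr_gt0 eps1 r0)) (ltW theta_lt_mu); lra.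
Qed.

Lemma IRG_eps_gt0 m : (1 <= m)%N -> 0 < eps m.
Proof. by case: m => // m _; case: (IRG_eps_r_ratio m). Qed.

Lemma IRG_nonnull_direction m : (1 <= m)%N -> x m.+1 != x m ->
  r m + eps m < enorm (g m) /\ d m = - ((enorm (g m) - eps m) / enorm (g m)) *: g m.
Proof.
move=> m1 nn; have [_ _ _ _ step] := run; have [_ _ + _ xm] := step m m1.
case: ifPn => [_ [_ _ dm] | ]; first by move: nn; rewrite xm dm scaler0 addr0 eqxx.
by rewrite -ltNge => Gm [_ _ dm].
Qed.

Lemma IRG_gradient_error m : (1 <= m)%N -> enorm (g m - gf (x m)) <= eps m.
Proof.
move=> m1; have [_ _ _ _ step] := run; have [_ err _ _ _] := step m m1.
by move: err; rewrite rho_eps // minxx.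
Qed.

Lemma IRG_direction_norm m : (1 <= m)%N -> x m.+1 != x m ->
  enorm (d m) = enorm (g m) - eps m.
Proof.
move=> m1 nn; have [Gm ->] := IRG_nonnull_direction m1 nn.
apply: enorm_inexact_direction; first exact/ltW/IRG_eps_gt0.
have [_ r0 _] := IRG_eps_r_ratio m.-1; rewrite prednK // in r0; lra.
Qed.

Lemma IRG_direction_gt0 m : (1 <= m)%N -> x m.+1 != x m -> 0 < enorm (d m).
Proof.
move=> m1 nn; have [Gm _] := IRG_nonnull_direction m1 nn.
have [_ r0 _] := IRG_eps_r_ratio m.-1; rewrite prednK // in r0.
by rewrite IRG_direction_norm //; lra.
Qed.

Lemma IRG_gradient_le m : (1 <= m)%N -> x m.+1 != x m ->
  enorm (gf (x m)) <= (1 + 2 * (eps 1%N / r 1%N)) * enorm (d m).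
Proof.
move=> m1 nn; rewrite IRG_direction_norm //.
have [Gm _] := IRG_nonnull_direction m1 nn.
have [e0 r0 er] : [/\ 0 < eps m, 0 < r m & eps m * r 1%N <= eps 1%N * r m].
  by have := IRG_eps_r_ratio m.-1; rewrite prednK.
have [eps1 r1 _ _ _] := run.
have ec : eps m <= eps 1%N / r 1%N * (enorm (g m) - eps m).
  rewrite mulrAC ler_pdivlMr //; apply: le_trans er _.
  by rewrite ler_pM2l //; lra.
have := enormD_le (g m) (gf (x m) - g m); rewrite addrC subrK enormBC.
have := IRG_gradient_error m1; lra.
Qed.

Lemma IRG_step_le m : (1 <= m)%N -> enorm (x m.+1 - x m) <= (2 - delta) / L * enorm (d m).
Proof.
move=> m1; have [_ _ _ _ step] := run; have [_ _ _ t0 ->] := step m m1.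
have /andP[_ tL] := t_bounds m1.
rewrite addrC addKr enormZ ger0_norm ?(ltW t0) //.
by apply: ler_wpM2r; [exact: enorm_ge0 | exact: tL].
Qed.

Lemma IRG_sufficient_decrease m : (1 <= m)%N -> x m.+1 != x m ->
  f (x m.+1) <= f (x m) - delta * delta' / 2 * enorm (d m) ^+ 2.
Proof.
move=> m1 nn; have [_ _ _ _ step] := run; have [_ _ _ t0 xm] := step m m1.
have [Gm dm] := IRG_nonnull_direction m1 nn.
have dg : dotv (gf (x m)) (d m) <= - enorm (d m) ^+ 2.
  rewrite IRG_direction_norm // dm; apply: dotv_inexact_direction.
  - exact/ltW/IRG_eps_gt0.
  - have [_ r0 _] := IRG_eps_r_ratio m.-1; rewrite prednK // in r0; lra.
  - exact: IRG_gradient_error.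
have /andP[tl tu] := t_bounds m1.
have tL : t m * L <= 2 - delta by rewrite -ler_pdivlMr.
have gain : delta * delta' / 2 <= t m - L / 2 * t m ^+ 2.
  have := ler_wpM2l (ltW t0) tL; have := ler_wpM2l (ltW delta_gt0) tl; lra.
have d2 := sqr_ge0 (enorm (d m)).
have := L_descent_line (x m) (d m) descent (ltW t0); rewrite -xm.
have := ler_wpM2l (ltW t0) dg; have := ler_wpM2r d2 gain; lra.
Qed.

End IRG.

Unset Implicit Arguments.

Theorem mainTheorem17 (R : realType) (n : nat)
  (f : 'rV[R]_n -> R) (gf : 'rV[R]_n -> 'rV[R]_n) (L : R)
  (mu theta delta delta' : R)
  (x g d : nat -> 'rV[R]_n) (eps r rho t : nat -> R)
  (xbar : 'rV[R]_n) (M q : R) (j : nat -> nat) :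
  C1_with_gradient f gf ->
  0 < L -> L_descent f gf L ->
  IRG_run gf L mu theta delta delta' x g d eps r rho t ->
  theta < mu ->
  (forall k, (1 <= k)%N -> rho k = eps k) ->
  0 < delta < 2 -> 0 < delta' -> delta' <= (2 - delta) / L ->
  (forall k, (1 <= k)%N -> delta' <= t k <= (2 - delta) / L) ->
  accumulation_point x xbar ->
  0 < M -> 0 < q < 1 -> KL_power f gf xbar M q ->
  (forall k, (1 <= k)%N -> (j k < j k.+1)%N) ->
  (forall m, (1 <= m)%N -> (x m.+1 != x m <-> exists k, (1 <= k)%N /\ j k = m)) ->
  (q <= 1 / 2 ->
     exists C lam : R, 0 < C /\ 0 < lam < 1 /\
       exists K : nat, forall k, (K <= k)%N ->
         enorm (x (j k) - xbar) <= C * lam ^+ k) /\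
  (1 / 2 < q ->
     exists vr : R, 0 < vr /\
       exists K : nat, forall k, (K <= k)%N ->
         enorm (x (j k) - xbar) <= vr * powR (k%:R) (- ((1 - q) / (2 * q - 1)))).
Proof.
move=> [f_diff _] L0 descent run thmu rho_eps /andP[dl0 dl2] dp0 _ t_bd acc M0
  /andP[q0 q1] [eta [eta0 [rh [rh0 KLx]]]] j_incr j_iff.
have j_null m : (1 <= m)%N -> x m.+1 <> x m -> exists k, (1 <= k)%N /\ j k = m.
  by move=> m1 /eqP; exact: (j_iff m m1).1.
have nonnull k : (2 <= k)%N -> x (j k).+1 != x (j k).
  by move=> k2; apply/(j_iff _ (enum_gt0 j_incr k2)); exists k; split => //; exact: ltnW.
pose z k := x (j k).
have z_next k : (2 <= k)%N -> z k.+1 = x (j k).+1.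
  by move=> k2; apply: (enum_next j_incr j_null); exact: ltnW.
have [eps1 r1 _ _ _] := run.
have be0 : 0 < 1 + 2 * (eps 1%N / r 1%N).
  by apply: addr_gt0 => //; apply: mulr_gt0 => //; exact: divr_gt0.
have T0 : 0 < (2 - delta) / L by rewrite divr_gt0 // subr_gt0.
have al0 : 0 < delta * delta' / 2 by rewrite !divr_gt0 ?mulr_gt0.
have decr k : (2 <= k)%N -> f (z k.+1) - f xbar <=
    f (z k) - f xbar - delta * delta' / 2 * enorm (d (j k)) ^+ 2.
  move=> k2; have := IRG_sufficient_decrease run thmu rho_eps L0 descent dl0 t_bd
    (enum_gt0 j_incr k2) (nonnull k k2); rewrite -z_next //; lra.
have f_decr k : (2 <= k)%N -> f (z k.+1) < f (z k).
  move=> k2; have := decr k k2.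
  have := IRG_direction_gt0 run thmu (enum_gt0 j_incr k2) (nonnull k k2).
  move=> /(exprn_gt0 2)/(mulr_gt0 al0); lra.
have f_cont : {for xbar, continuous f} := differentiable_continuous (f_diff xbar).1.
have z_freq e : 0 < e -> forall K, exists k, (K <= k)%N /\ enorm (z k - xbar) < e.
  move=> e0; pose P y := enorm (y - xbar) < e.
  exact: (enum_frequently j_incr j_null (P := P)) (acc e e0).
have a_gt0 k : (2 <= k)%N -> 0 < f (z k) - f xbar.
  by move=> k2; rewrite subr_gt0; exact: values_gt_limit f_cont z_freq f_decr k k2.
apply: (KL_convergence_rates (z := z) (xb := xbar) (a := fun k => f (z k) - f xbar)
  (D := fun k => enorm (d (j k))) (k1 := 2) al0 be0 T0 M0 q0 q1 eta0 rh0) => //.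
- by move=> k _; exact: enorm_ge0.
- by move=> k k2; rewrite z_next //; have := IRG_step_le run t_bd (enum_gt0 j_incr k2).
- move=> k k2 near small; apply: le_trans (IRG_gradient_le run thmu rho_eps
    (enum_gt0 j_incr k2) (nonnull k k2)).
  by apply: KLx => //; [rewrite -subr_gt0 a_gt0 | rewrite -ltrBlDl].
- by move=> e e0; have := values_cvg_limit f_cont z_freq f_decr e0.
Qed.
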